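(* For integers $r\ge0$ and $k\ge 1$ let $\mathcal{N}(r;k)$ be the number of proper complete $(r-1,k)$-graphs on the vertex set $\{1,\dots,k\}$, and set $\mathcal{N}(r;0)=1$ for all $r\ge0$. Then $\mathcal{N}(0;k)=1$ for all $k$, and for $r,k\ge1$ \[\mathcal{N}(r;k)=\frac12\sum_{a=0}^{k}\binom{k}{a}\mathcal{N}(r-1;a)\mathcal{N}(r-1;k-a).\] Equivalently the formal series $E(X;r)=\sum_{k\ge0}\mathcal{N}(r;k)X^k/k!$ satisfy $E(X;0)=e^X$ and $E(X;r)=\tfrac12\big(1+E(X;r-1)^2\big)$ for $r\ge1$. Consequently there are real numbers $\nu(r;m)\ge0$ ($0\le m\le 2^r$) with $\sum_m\nu(r;m)=1$ such that $\mathcal{N}(r;k)=\sum_{m=0}^{2^r}\nu(r;m)m^k$ for all $k\ge 0$ (with $0^0=1$), and $\nu(r;0)=1-\mu_r$.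
   Context: A $(D,k)$-graph is a weighted graph on $k$ vertices in which each edge $ij$ carries an integer weight $d(i,j)\in[-1,D]$; it is complete if every pair of distinct vertices is joined by an edge. A complete $(D,k)$-graph is proper if for all distinct vertices $a,b,c$ with $d(a,b)\le d(a,c)\le d(b,c)$ one has either $d(a,b)=d(a,c)=d(b,c)=-1$, or $d(a,b)<d(a,c)=d(b,c)$. (A graph on one vertex has no edges and counts as proper complete.) The constants $\mu_r$ are defined by $\mu_0=1$, $\mu_{r+1}=\mu_r-\tfrac12\mu_r^2$. *)

From HB Require Import structures.
From mathcomp Require Import all_boot all_order all_algebra.
Set Implicit Arguments. Unset Strict Implicit. Unset Printing Implicit Defensive.
Import Order.TTheory GRing.Theory Num.Theory.

(* A complete (r-1,k)-graph on vertex set 'I_k is encoded by a finite function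
   d : 'I_k * 'I_k -> 'I_(r+1); the weight of edge {i,j} is (d (i,j)) - 1,
   which ranges over the integers in [-1, r-1].  To get a bijection with edge
   weightings we require d symmetric and d (i,i) = 0 on the diagonal
   (diagonal values carry no information). *)

Definition wt (k r : nat) (d : {ffun 'I_k * 'I_k -> 'I_r.+1}) (i j : 'I_k) : int :=
  ((nat_of_ord (d (i, j)))%:Z - 1)%R.

Definition edge_weighting (k r : nat) (d : {ffun 'I_k * 'I_k -> 'I_r.+1}) : bool :=
  [forall i : 'I_k, forall j : 'I_k,
     (d (i, j) == d (j, i)) && ((i == j) ==> (nat_of_ord (d (i, j)) == 0%N))].

Definition proper_graph (k r : nat) (d : {ffun 'I_k * 'I_k -> 'I_r.+1}) : bool :=
  [forall a : 'I_k, forall b : 'I_k, forall c : 'I_k,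
     [&& a != b, a != c & b != c] ==>
     (((wt d a b <= wt d a c)%R && (wt d a c <= wt d b c)%R) ==>
      ([&& wt d a b == (-1)%R, wt d a c == (-1)%R & wt d b c == (-1)%R]
       || ((wt d a b < wt d a c)%R && (wt d a c == wt d b c))))].

Definition Ncount (r k : nat) : nat :=
  if k is 0 then 1%N
  else #|[pred d : {ffun 'I_k * 'I_k -> 'I_r.+1} | edge_weighting d && proper_graph d]|.

Fixpoint mu (R : fieldType) (r : nat) : R :=
  match r with
  | 0 => 1%R
  | r'.+1 => (mu R r' - (mu R r') ^+ 2 / 2%:R)%R
  end.

From HB Require Import structures.
From mathcomp Require Import all_boot all_order all_algebra.
From mathcomp Require Import zify ring.
Import Order.TTheory GRing.Theory Num.Theory.
Set Implicit Arguments. Unset Strict Implicit. Unset Printing Implicit Defensive.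

(* In a proper graph with weights in [-1, r] and r >= 0, the edges of top
   weight r are exactly the edges crossing a cut {A, ~A} of the vertex set,
   unique up to swapping the sides: every triangle has its two largest sides
   equal, and no triangle has three top sides.  Deleting the top edges leaves
   proper graphs with weights in [-1, r-1] on A and on ~A, and conversely any
   two such graphs glue back.  Counting each graph once per side of its cut
   gives 2 N(r+1;k) = sum_A N(r;|A|) N(r;k-|A|).

   For the moments take nu(r;m) to be the coefficients of P_0 = X,
   P_(r+1) = (1 + P_r^2)/2.  The k-th moment sum_m c_m m^k of a polynomial
   is ((X d/dX)^k P)(1); since X d/dX is a derivation, moments of a product
   obey the Leibniz rule, which turns P_(r+1) = (1 + P_r^2)/2 into the
   recurrence for N. *)

Notation weighting T n := {ffun T * T -> 'I_n}.

(* [w x y] is the weight of the edge [xy] shifted by one, so [0] stands for the weight [-1]. *)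
Definition proper (T : Type) (w : T -> T -> nat) : Prop :=
  [/\ forall x y, w x y = w y x, forall x, w x x = 0 &
      forall a b c, a <> b -> a <> c -> b <> c -> w a b <= w a c <= w b c ->
        (w a b = 0 /\ w a c = 0 /\ w b c = 0) \/ w a b < w a c /\ w a c = w b c].

Section ProperDist.
Variables (T : Type) (w : T -> T -> nat).
Hypothesis w_proper : proper w.

Lemma proper_isosceles a b c : a <> b -> a <> c -> b <> c ->
  w a c < w a b -> w b c = w a b.
Proof.
have [wS _ wP] := w_proper => ab ac bc lt_ac_ab.
have [le_bc_ac|lt_ac_bc] := leqP (w b c) (w a c).
- have := wP c b a (nesym bc) (nesym ac) (nesym ab).
  rewrite (wS c b) (wS c a) (wS b a); lia.
have [le_bc_ab|lt_ab_bc] := leqP (w b c) (w a b).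
- have := wP c a b (nesym ac) (nesym bc) ab.
  rewrite (wS c a) (wS c b); lia.
have := wP a c b ac ab (nesym bc); rewrite (wS c b); lia.
Qed.

Lemma proper_equilateral a b c : a <> b -> a <> c -> b <> c ->
  w a b = w a c -> w a c = w b c -> w a b = 0.
Proof. by have [_ _ wP] := w_proper => ab ac bc e1 e2; have := wP a b c ab ac bc; lia. Qed.
End ProperDist.

Lemma proper_pullback (T1 T2 : Type) (f : T1 -> T2) (w1 : T1 -> T1 -> nat) w2 :
  injective f -> (forall x y, w1 x y = w2 (f x) (f y)) -> proper w2 -> proper w1.
Proof.
move=> f_inj w12 [wS w0 wP]; split=> [x y|x|a b c ab ac bc]; rewrite ?w12 //.
by apply: wP => /f_inj.
Qed.

Section ProperGraphs.
Variables (T : finType) (n : nat).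
Implicit Type d : weighting T n.

Definition weight d (x y : T) : nat := d (x, y).

Definition proper_graphb d : bool :=
  [forall i, forall j, (d (i, j) == d (j, i)) && ((i == j) ==> (weight d i j == 0))] &&
  [forall a, forall b, forall c, [&& a != b, a != c & b != c] ==>
     ((weight d a b <= weight d a c) && (weight d a c <= weight d b c)) ==>
     ([&& weight d a b == 0, weight d a c == 0 & weight d b c == 0]
      || ((weight d a b < weight d a c) && (weight d a c == weight d b c)))].

Lemma proper_graphP d : reflect (proper (weight d)) (proper_graphb d).
Proof.
apply: (iffP andP) => [[/forallP E /forallP P]|[dS d0 dP]]; last first.
  split; apply/forallP => a; apply/forallP => b.
    by rewrite -val_eqE /= [X in _ == X]dS eqxx /=; apply/implyP => /eqP <-; rewrite d0.
  apply/forallP => c; apply/implyP => /and3P[/eqP ab /eqP ac /eqP bc].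
  by apply/implyP => /(dP a b c ab ac bc) [[-> [-> ->]]|[-> ->]]; rewrite eqxx ?orbT.
split.
- by move=> x y; rewrite /weight; have /forallP/(_ y)/andP[/eqP -> _] := E x.
- by move=> x; have /forallP/(_ x)/andP[_ /implyP/(_ (eqxx x))/eqP] := E x.
move=> a b c /eqP ab /eqP ac /eqP bc abc.
have /forallP/(_ b)/forallP/(_ c) := P a; rewrite ab ac bc abc /=.
by case/orP => [/and3P[/eqP ? /eqP ? /eqP ?]|/andP[? /eqP ?]]; [left|right].
Qed.

Definition proper_graphs := [set d | proper_graphb d].
End ProperGraphs.

Lemma edge_weighting_proper_graph k r (d : weighting 'I_k r.+1) :
  edge_weighting d && proper_graph d = proper_graphb d.
Proof.
congr (_ && _); do 3![apply: eq_forallb => ?].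
by rewrite /wt -(sub0r 1) !lerD2r !ltrD2r !(inj_eq (addIr _)) !lez_nat !ltz_nat !eqz_nat.
Qed.

Lemma Ncount_proper_graphs r k : Ncount r k = #|proper_graphs 'I_k r.+1|.
Proof.
case: k => [|k]; last by rewrite cardsE; apply: eq_card => d; rewrite inE edge_weighting_proper_graph.
have -> : proper_graphs 'I_0 r.+1 = setT.
  by apply/setP => d; rewrite !inE; apply/andP; split; apply/forallP => -[].
by rewrite cardsT card_ffun card_prod !card_ord.
Qed.

Definition pull (T1 T2 : finType) n (f : T1 -> T2) (d : weighting T2 n) :
  weighting T1 n := [ffun p => d (f p.1, f p.2)].

Lemma pullK (T1 T2 : finType) n (f : T1 -> T2) g :
  cancel g f -> cancel (pull (n := n) f) (pull g).
Proof. by move=> gK d; apply/ffunP => -[x y]; rewrite !ffunE /= !gK. Qed.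

Lemma proper_graphb_pull (T1 T2 : finType) n (f : T1 -> T2) (d : weighting T2 n) :
  injective f -> proper_graphb d -> proper_graphb (pull f d).
Proof.
move=> f_inj /proper_graphP d_proper; apply/proper_graphP.
by apply: proper_pullback f_inj _ d_proper => x y; rewrite /weight ffunE.
Qed.

Lemma card_proper_graphs_eq (T1 T2 : finType) n :
  #|T1| = #|T2| -> #|proper_graphs T1 n| = #|proper_graphs T2 n|.
Proof.
move=> eqT; pose f x := enum_val (cast_ord eqT (enum_rank x)).
pose g y := enum_val (cast_ord (esym eqT) (enum_rank y)).
have fK : cancel f g by move=> x; rewrite /f /g enum_valK cast_ordK enum_rankK.
have gK : cancel g f by move=> y; rewrite /f /g enum_valK cast_ordKV enum_rankK.
rewrite -(card_imset _ (can_inj (pullK (n := n) gK))); apply: eq_card => d.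
rewrite inE; apply/idP/imsetP => [d_proper|[d2 + ->]].
  exists (pull g d); last by rewrite (pullK (n := n) fK).
  by rewrite inE proper_graphb_pull //; apply: can_inj gK.
by rewrite inE; apply: proper_graphb_pull; apply: can_inj fK.
Qed.

Section TopCut.
Variables (T : finType) (t : nat) (w : T -> T -> nat).

Definition top_cut (A : {set T}) : bool :=
  [forall x, forall y, (w x y == t) == ((x \in A) != (y \in A))].

Lemma top_cutP (A : {set T}) : reflect (forall x y, (w x y == t) = ((x \in A) != (y \in A))) (top_cut A).
Proof.
apply: (iffP forallP) => [cutA x y|cutA x]; last by apply/forallP => y; rewrite cutA.
by have /forallP/(_ y)/eqP := cutA x.
Qed.

Lemma top_cut_uniq (A B : {set T}) : top_cut A -> top_cut B -> B = A \/ B = ~: A.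
Proof.
move=> /top_cutP cutA /top_cutP cutB.
have [x0 _|T0] := pickP (@predT T); last by left; apply/setP => y; have := T0 y.
have [x0A|x0A] := boolP ((x0 \in A) == (x0 \in B)); [left|right]; apply/setP => y;
  have := cutA x0 y; rewrite cutB ?inE;
  by case: (x0 \in A) (x0 \in B) (y \in A) (y \in B) x0A => [] [] [] [].
Qed.

Lemma top_cutC (A : {set T}) : top_cut A -> top_cut (~: A).
Proof. by move=> /top_cutP cutA; apply/top_cutP => x y; rewrite !inE cutA; case: (x \in A) (y \in A) => [] []. Qed.

Hypotheses (w_proper : proper w) (t_gt0 : 0 < t) (w_le : forall x y, w x y <= t).

Lemma top_neq x y : w x y = t -> x <> y.
Proof. by have [_ w0 _] := w_proper => wxy xy; move: wxy t_gt0; rewrite xy w0 => <-. Qed.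

Lemma top_triangle_free a b c : w a b = t -> w a c = t -> w b c = t -> False.
Proof.
move=> ab ac bc; have := proper_equilateral w_proper (top_neq ab) (top_neq ac) (top_neq bc).
lia.
Qed.

Lemma top_step a b c : w a b = t -> w a c != t -> w b c = t.
Proof.
have [wS w0 _] := w_proper => ab /eqP ac.
have [-> | ca] := eqVneq c a; first by rewrite wS.
have [cb | cb] := eqVneq c b; first by rewrite cb in ac.
rewrite (proper_isosceles w_proper (top_neq ab)) //; [exact/nesym/eqP | exact/nesym/eqP |].
by have := w_le a c; lia.
Qed.

Lemma top_cut_witness x0 : top_cut [set y | w x0 y != t].
Proof.
have [wS _ _] := w_proper.
apply/top_cutP => x y; rewrite !inE.
case ex: (w x0 x == t); case ey: (w x0 y == t) => /=.
- by apply/negbTE/eqP => xy; apply: top_triangle_free (eqP ex) (eqP ey) xy.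
- by apply/eqP; apply: top_step (eqP ex) _; rewrite ey.
- by rewrite wS; apply/eqP; apply: top_step (eqP ey) _; rewrite ex.
apply/negbTE/eqP => xy; move/negbT: ex; rewrite wS => /(top_step xy)/eqP.
by rewrite wS ey.
Qed.

Lemma card_top_cuts (x0 : T) : #|[set A | top_cut A]| = 2.
Proof.
set A0 := [set y | w x0 y != t].
have -> : [set A | top_cut A] = [set A0; ~: A0].
  apply/setP => B; rewrite !inE; apply/idP/orP => [cutB|[] /eqP ->].
  - by case: (top_cut_uniq (top_cut_witness x0) cutB) => ->; [left|right].
  - exact: top_cut_witness.
  - exact/top_cutC/top_cut_witness.
rewrite cards2; case: eqP => // /setP/(_ x0).
by rewrite !inE; case: (w x0 x0 == t).
Qed.
End TopCut.

Section Split.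
Variables (T : finType) (r : nat).
Local Notation vtx S := {x : T | x \in S}.
Implicit Types (S : {set T}) (d : weighting T r.+2) (x y : T).

Definition restrict S d : weighting (vtx S) r.+1 := [ffun p => inord (d (val p.1, val p.2))].

Definition extend S (e : weighting (vtx S) r.+1) x y : nat :=
  if insub x is Some u then if insub y is Some v then e (u, v) : nat else 0 else 0.

Lemma extend_le S e x y : @extend S e x y <= r.
Proof.
rewrite /extend; case: insub => [u|] //; case: insub => [v|] //.
by rewrite -ltnS.
Qed.

Lemma extendE S e x y (xS : x \in S) (yS : y \in S) : @extend S e x y = e (Sub x xS, Sub y yS).
Proof. by rewrite /extend !insubT. Qed.

Lemma extend_val S e (u v : vtx S) : @extend S e (val u) (val v) = e (u, v).
Proof. by rewrite /extend !valK. Qed.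

Section ExtendProper.
Variables (S : {set T}) (e : weighting (vtx S) r.+1).
Hypothesis e_proper : proper (weight e).

Lemma extend_sym x y : extend e x y = extend e y x.
Proof.
have [eS _ _] := e_proper; rewrite /extend.
by case: (insub x) => [u|]; case: (insub y) => [v|] //; apply: eS.
Qed.

Lemma extend_diag x : extend e x x = 0.
Proof. by have [_ e0 _] := e_proper; rewrite /extend; case: (insub x) => [u|] //; apply: e0. Qed.

Lemma extend_triangle a b c : a \in S -> b \in S -> c \in S -> a <> b -> a <> c -> b <> c ->
  extend e a b <= extend e a c <= extend e b c ->
  (extend e a b = 0 /\ extend e a c = 0 /\ extend e b c = 0) \/
  extend e a b < extend e a c /\ extend e a c = extend e b c.
Proof.
have [_ _ eP] := e_proper => aS bS cS ab ac bc.
by rewrite !extendE; apply: eP => /(congr1 val) /=.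
Qed.
End ExtendProper.

Lemma restrict_proper S d : proper (weight d) ->
  (forall x y, x \in S -> y \in S -> weight d x y != r.+1) -> proper (weight (restrict S d)).
Proof.
move=> d_proper not_top; apply: proper_pullback val_inj _ d_proper => u v.
have /not_top/(_ (valP v)) := valP u; rewrite /weight ffunE /= => /eqP not_top_uv.
have := ltn_ord (d (val u, val v)); rewrite ltnS leq_eqVlt => /predU1P[//|lt_uv_r].
by rewrite inordK.
Qed.

Variable A : {set T}.
Definition glue_dist (e1 : weighting (vtx A) r.+1)
    (e2 : weighting (vtx (~: A)) r.+1) x y : nat :=
  if (x \in A) != (y \in A) then r.+1 else if x \in A then extend e1 x y else extend e2 x y.

Definition glue e1 e2 : weighting T r.+2 := [ffun p => inord (glue_dist e1 e2 p.1 p.2)].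

Lemma glueE e1 e2 x y : weight (glue e1 e2) x y = glue_dist e1 e2 x y.
Proof.
rewrite /weight ffunE inordK // /glue_dist.
by case: ifP => _; last case: ifP => _; rewrite ltnS ?leqnSn // ltnW // ltnS extend_le.
Qed.

Lemma restrict_glue e1 e2 : restrict A (glue e1 e2) = e1 /\ restrict (~: A) (glue e1 e2) = e2.
Proof.
split; apply/ffunP => -[u v]; apply/val_inj; rewrite ffunE /= -/(weight _ _ _) glueE /glue_dist.
  by rewrite (valP u) (valP v) /= extend_val inordK.
have := valP u; have := valP v; rewrite !inE => /negPf -> /negPf -> /=.
by rewrite extend_val inordK.
Qed.

Lemma glue_top_cut e1 e2 : top_cut r.+1 (weight (glue e1 e2)) A.
Proof.
apply/top_cutP => x y; rewrite glueE /glue_dist.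
have := extend_le e1 x y; have := extend_le e2 x y.
by case: (x \in A) (y \in A) => [] [] /= le2 le1; rewrite ?eqxx // ltn_eqF.
Qed.

Lemma glue_restrict d : top_cut r.+1 (weight d) A -> glue (restrict A d) (restrict (~: A) d) = d.
Proof.
move=> /top_cutP cutA; apply/ffunP => -[x y]; apply/val_inj; rewrite /= -/(weight _ x y) glueE.
have := cutA x y; rewrite /glue_dist /weight; have := ltn_ord (d (x, y)).
case: ifP => [_ _ /eqP //|/negbFE/eqP sameA le_r1 /eqP top].
case: ifP => xA.
  by rewrite (extendE _ xA (etrans (esym sameA) xA)) ffunE !SubK inordK //; lia.
have xAc : x \in ~: A by rewrite inE xA.
have yAc : y \in ~: A by rewrite inE -sameA xA.
by rewrite (extendE _ xAc yAc) ffunE !SubK inordK //; lia.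
Qed.

Lemma glue_proper e1 e2 :
  proper (weight e1) -> proper (weight e2) -> proper (weight (glue e1 e2)).
Proof.
move=> e1_proper e2_proper; split=> [x y|x|a b c ab ac bc]; rewrite !glueE /glue_dist.
- by rewrite eq_sym; case: (x \in A) (y \in A) => [] [] //=; apply: extend_sym.
- by rewrite eqxx; case: (x \in A); apply: extend_diag.
have := extend_le e1 a b; have := extend_le e1 a c; have := extend_le e1 b c.
have := extend_le e2 a b; have := extend_le e2 a c; have := extend_le e2 b c.
have inAc z : (z \in ~: A) = ~~ (z \in A) by rewrite inE.
case aA: (a \in A); case bA: (b \in A); case cA: (c \in A) => /=; try lia.
  by move=> *; apply: extend_triangle.
by move=> *; apply: extend_triangle; rewrite // inAc ?aA ?bA ?cA.
Qed.

Lemma card_proper_graphs_cut :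
  #|[set d in proper_graphs T r.+2 | top_cut r.+1 (weight d) A]| =
  #|proper_graphs (vtx A) r.+1| * #|proper_graphs (vtx (~: A)) r.+1|.
Proof.
pose g p := glue p.1 p.2.
have gK : cancel g (fun d => (restrict A d, restrict (~: A) d)).
  by move=> [e1 e2]; rewrite /g; case: (restrict_glue e1 e2) => -> ->.
rewrite -cardsX -(card_imset _ (can_inj gK)); apply: eq_card => d; rewrite !inE.
apply/idP/imsetP => [/andP[/proper_graphP d_proper cutA]|[[e1 e2] + ->]].
  exists (restrict A d, restrict (~: A) d); last by rewrite /g glue_restrict.
  have /top_cutP top := cutA.
  rewrite !inE; apply/andP; split; apply/proper_graphP/restrict_proper => // x y.
    by rewrite top => -> ->.
  by rewrite top !inE => /negPf -> /negPf ->.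
rewrite !inE => /andP[/proper_graphP e1_proper /proper_graphP e2_proper].
by rewrite glue_top_cut andbT; apply/proper_graphP/glue_proper.
Qed.
End Split.

Lemma card_proper_graphs_succ (T : finType) r (x0 : T) :
  2 * #|proper_graphs T r.+2| =
  \sum_(A : {set T}) #|proper_graphs {x | x \in A} r.+1| * #|proper_graphs {x | x \in ~: A} r.+1|.
Proof.
under eq_bigr => A _ do rewrite -card_proper_graphs_cut -sum1dep_card.
rewrite (exchange_big_dep (mem (proper_graphs T r.+2))) /=; last by move=> A d _ /andP[].
rewrite mulnC -sum1_card big_distrl /=; apply: eq_bigr => d d_proper.
have w_le x y : weight d x y <= r.+1 := ltn_ord (d (x, y)).
rewrite inE in d_proper; have /proper_graphP w_proper := d_proper.
rewrite sum1dep_card mul1n -(card_top_cuts w_proper (ltn0Sn r) w_le x0).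
by apply: eq_card => A; rewrite !inE d_proper.
Qed.

Lemma card_proper_graphs_sub (T : finType) (A : {set T}) r :
  #|proper_graphs {x | x \in A} r.+1| = Ncount r #|A|.
Proof.
rewrite Ncount_proper_graphs; apply: card_proper_graphs_eq.
by rewrite card_sig card_ord; apply: eq_card.
Qed.

Lemma sum_set_card (T : finType) (F : nat -> nat) :
  \sum_(A : {set T}) F #|A| = \sum_(a < #|T|.+1) 'C(#|T|, a) * F a.
Proof.
rewrite (partition_big (fun A : {set T} => inord #|A| : 'I_#|T|.+1) predT) //=.
apply: eq_bigr => a _; rewrite -card_draws -sum_nat_cond_const.
apply: eq_big => [A|A /eqP <-]; last by rewrite inordK // ltnS max_card.
by rewrite -val_eqE /= inordK // ltnS max_card.
Qed.

Lemma Ncount_rec r k : 0 < k ->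
  2 * Ncount r.+1 k = \sum_(a < k.+1) 'C(k, a) * Ncount r a * Ncount r (k - a).
Proof.
case: k => [|k] // _.
rewrite Ncount_proper_graphs (card_proper_graphs_succ _ (ord0 : 'I_k.+1)).
have cardC (A : {set 'I_k.+1}) : #|~: A| = k.+1 - #|A|.
  by have := cardsC A; rewrite card_ord; lia.
under eq_bigr => A _ do rewrite !card_proper_graphs_sub cardC.
rewrite (sum_set_card _ (fun a => Ncount r a * Ncount r (k.+1 - a))) card_ord.
by under eq_bigr do rewrite mulnA.
Qed.

Lemma Ncount0 k : Ncount 0 k = 1.
Proof.
have val_ord1 (i : 'I_1) : val i = 0 by case: i => -[].
rewrite Ncount_proper_graphs; have -> : proper_graphs 'I_k 1 = setT.
  apply/setP => d; rewrite !inE; apply/proper_graphP.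
  by split=> *; rewrite /weight ?val_ord1 //; left.
by rewrite cardsT card_ffun card_ord exp1n.
Qed.

Local Open Scope ring_scope.

Section IteratedDerivation.
Variables (R : ringType) (D : R -> R).
Hypotheses (D_add : {morph D : x y / x + y}) (D_mul : forall x y, D (x * y) = D x * y + x * D y).

Lemma iter_derivationM k x y :
  iter k D (x * y) = \sum_(a < k.+1) (iter a D x * iter (k - a) D y) *+ 'C(k, a).
Proof.
have D0 : D 0 = 0 by apply: (addrI (D 0)); rewrite -D_add !addr0.
have D_natmul z n : D (z *+ n) = D z *+ n by elim: n => [|n IH]; rewrite ?D0 // !mulrS D_add IH.
elim: k => [|k IH]; first by rewrite big_ord1 mulr1n.
rewrite iterS IH (big_morph D D_add D0).
transitivity (\sum_(a < k.+1) (iter a.+1 D x * iter (k - a) D y) *+ 'C(k, a)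
            + \sum_(a < k.+1) (iter a D x * iter (k - a).+1 D y) *+ 'C(k, a)).
  by rewrite -big_split; apply: eq_bigr => a _; rewrite D_natmul D_mul mulrnDl.
(* Pascal's rule C(k+1, a+1) = C(k, a+1) + C(k, a) splits the right-hand side into the two sums. *)
rewrite [RHS]big_ord_recl.
under [X in _ = _ + X]eq_bigr => a _ do rewrite subSS binS mulrnDr.
rewrite big_split /= [X in _ = _ + X]addrC addrCA; congr (_ + _).
rewrite big_ord_recl [X in _ = _ + X]big_ord_recr /= (bin_small (ltnSn k)) mulr0n addr0 !bin0.
by rewrite subn0; congr (_ + _); apply: eq_bigr => i _; rewrite /bump add1n -(subnSK (ltn_ord i)).
Qed.
End IteratedDerivation.

Section Moments.
Variable R : comRingType.
Implicit Types p q : {poly R}.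

Definition theta p := 'X * p^`().

Lemma thetaD p q : theta (p + q) = theta p + theta q.
Proof. by rewrite /theta derivD mulrDr. Qed.

Lemma thetaM p q : theta (p * q) = theta p * q + p * theta q.
Proof. by rewrite /theta derivM mulrDr mulrA mulrCA. Qed.

Lemma coef_iter_theta k p i : (iter k theta p)`_i = p`_i * i%:R ^+ k.
Proof.
elim: k => [|k IH]; first by rewrite mulr1.
rewrite iterS /theta coefXM; case: i IH => [|i] IH; first by rewrite expr0n mulr0.
by rewrite coef_deriv IH -mulrnAr -mulr_natl -exprS.
Qed.

Definition moment k p := (iter k theta p).[1].

Lemma momentE k p n : (size p <= n)%N -> moment k p = \sum_(i < n) p`_i * i%:R ^+ k.
Proof.
move=> le_p_n; rewrite /moment (horner_coef_wide (n := n)); last first.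
  by apply/leq_sizeP => j le_nj; rewrite coef_iter_theta (leq_sizeP _ _ le_p_n j le_nj) mul0r.
by apply: eq_bigr => i _; rewrite coef_iter_theta expr1n mulr1.
Qed.

Lemma momentD k p q : moment k (p + q) = moment k p + moment k q.
Proof.
have le_pq := leq_trans (size_add p q).
rewrite !(momentE _ (n := maxn (size p) (size q))) ?leq_maxl ?leq_maxr ?le_pq //.
by rewrite -big_split; apply: eq_bigr => i _; rewrite coefD mulrDl.
Qed.

Lemma momentZ k c p : moment k (c *: p) = c * moment k p.
Proof.
rewrite !(momentE _ (n := size p)) ?size_scale_leq // mulr_sumr.
by apply: eq_bigr => i _; rewrite coefZ mulrA.
Qed.

Lemma moment1 k : moment k 1 = (k == 0)%:R.
Proof. by rewrite (momentE _ (n := 1)) ?size_poly1 // big_ord1 coefC mul1r expr0n. Qed.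

Lemma momentX k : moment k 'X = 1.
Proof.
rewrite (momentE _ (n := 2)) ?size_polyX // big_ord_recr big_ord1 /= !coefX /=.
by rewrite mul0r add0r mul1r expr1n.
Qed.

Lemma momentM k p q :
  moment k (p * q) = \sum_(a < k.+1) (moment a p * moment (k - a) q) *+ 'C(k, a).
Proof.
rewrite /moment (iter_derivationM thetaD thetaM) horner_sum.
by apply: eq_bigr => a _; rewrite hornerMn hornerM.
Qed.
End Moments.

Section NuPoly.
Variable R : numFieldType.

Fixpoint nu_poly r : {poly R} := if r is r'.+1 then 2^-1 *: (1 + nu_poly r' ^+ 2) else 'X.

Lemma coef_nu_poly_ge0 r m : 0 <= (nu_poly r)`_m.
Proof.
elim: r m => [|r IH] m /=; first by rewrite coefX ler0n.
rewrite coefZ coefD coef1 expr2 coefM mulr_ge0 ?invr_ge0 ?ler0n ?addr_ge0 ?ler0n //.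
by apply: sumr_ge0 => i _; apply: mulr_ge0.
Qed.

Lemma size_nu_poly r : (size (nu_poly r) <= (2 ^ r).+1)%N.
Proof.
elim: r => [|r IH] /=; first by rewrite size_polyX.
rewrite (leq_trans (size_scale_leq _ _)) // (leq_trans (size_add _ _)) // geq_max size_poly1.
rewrite expnS (leq_trans (size_mul_leq _ _)); lia.
Qed.

Lemma coef0_nu_poly r : (nu_poly r)`_0 = 1 - mu R r.
Proof.
elim: r => [|r IH] /=; first by rewrite coefX subrr.
by rewrite coefZ coefD coef1 expr2 coef0M IH /=; field.
Qed.

Lemma moment_nu_poly r k : moment k (nu_poly r) = (Ncount r k)%:R.
Proof.
elim: r k => [|r IH] k; first by rewrite momentX Ncount0.
have two_neq0 : (2 : R) != 0 by rewrite pnatr_eq0.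
rewrite /= momentZ momentD moment1 expr2 momentM.
under eq_bigr => a _ do rewrite !IH -natrM -mulr_natl -natrM mulnA.
case: k => [|k]; first by rewrite big_ord1 /= mulVf.
rewrite add0r -natr_sum -(Ncount_rec r (ltn0Sn k)) natrM mulKf //.
Qed.
End NuPoly.

Local Close Scope ring_scope.

Theorem mainTheorem14 :
  (forall k : nat, Ncount 0 k = 1%N) /\
  (forall r k : nat, (0 < k)%N ->
     (2 * Ncount r.+1 k = \sum_(a < k.+1) 'C(k, a) * Ncount r a * Ncount r (k - a))%N) /\
  (forall (R : realFieldType) (r : nat),
     exists nu : nat -> R,
       [/\ (forall m : nat, (m <= 2 ^ r)%N -> (0 <= nu m)%R),
           (\sum_(m < (2 ^ r).+1) nu m = 1)%R,
           (forall k : nat,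
              ((Ncount r k)%:R = \sum_(m < (2 ^ r).+1) nu m * (m%:R) ^+ k)%R)
         & nu 0%N = (1 - mu R r)%R]).
Proof.
split; first exact: Ncount0.
split; first exact: Ncount_rec.
move=> R r; exists (fun m => ((nu_poly R r)`_m)%R); split.
- by move=> m _; apply: coef_nu_poly_ge0.
- rewrite -[RHS]/((Ncount r 0)%:R)%R -moment_nu_poly (momentE _ (size_nu_poly R r)).
  by apply: eq_bigr => m _; rewrite expr0 mulr1.
- by move=> k; rewrite -moment_nu_poly (momentE _ (size_nu_poly R r)).
- exact: coef0_nu_poly.
Qed.
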